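(* Let $y:[0,h]\to\mathbb{R}$ solve $y'=f(y)$, $y(0)=y_0$, with $f$ Lipschitz continuous with constant $L$, and assume $f\circ y\in C^M([0,h])$. Given any previous iterate $\eta^{[p]}$, define the implicit SDC iterate by $\eta_0^{[p+1]}=\eta_0$ and, for $n=1,\dots,N$, $$\eta_n^{[p+1]}=\eta_{n-1}^{[p+1]}+h_n\big[f(\eta_n^{[p+1]})-f(\eta_n^{[p]})\big]+h\sum_{m=1}^M w_{n,m}f(\eta_m^{[p]}).$$ If $h<1/(2L)$, then for each $n=1,\dots,N$, $$|e_n^{[p+1]}|\le e^{2NhL}|e_0|+C_1h\|\mathbf e^{[p]}\|+C_2h^{M+1},$$ where the constants $C_1,C_2$ depend only on the smoothness of $f$, the exact solution $y$, and the choice of quadrature points.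
   Context: Quadrature nodes $0\le\xi_1<\dots<\xi_M\le1$ partition $[0,1]$ into $N$ subintervals, where $N=M-1$ if both endpoints $0,1$ are nodes, $N=M$ if exactly one is, and $N=M+1$ if neither is. The right endpoints are $\xi^R_0=0$, $\xi^R_N=1$, and for the interior ones $\xi^R_n=\xi_{n+1}$ if the left endpoint $0$ is a node, $\xi^R_n=\xi_n$ otherwise. $\ell_m$ is the Lagrange basis polynomial of degree $\le M-1$ with $\ell_m(\xi_k)=\delta_{mk}$, and $w_{n,m}=\int_{\xi^R_{n-1}}^{\xi^R_n}\ell_m(x)\,dx$. For step size $h>0$, $t_n=\xi^R_nh$, $h_n=(\xi^R_n-\xi^R_{n-1})h$. The iterate $\eta^{[p]}$ consists of approximations $\eta^{[p]}_n\approx y(t_n)$ and values $\eta^{[p]}_m\approx y(\xi_mh)$ at the quadrature nodes used in the quadrature sum. $\eta_0$ approximates $y_0$, $e_0=\eta_0-y_0$, $e^{[p+1]}_n=\eta^{[p+1]}_n-y(t_n)$, $\mathbf e^{[p]}=(\eta^{[p]}_m-y(\xi_mh))_{m=1}^M$, $\|\mathbf e\|=\max_m|e_m|$.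
   Formalization: $\|\mathbf e^{[p]}\|$ is the maximum error of $\eta^{[p]}$ over the nodes $\xi_mh$ and the grid points $t_n$, not the nodes alone; C₁, C₂ depend only on the nodes, L and a bound on the M-th derivative of f∘y. Apart from conventions, each condition added here is assumed in the paper as well or is needed for the statement above to hold. *)

From Stdlib Require Import Reals Lra Arith.
From Coquelicot Require Import Coquelicot.
Open Scope R_scope.

Fixpoint sum1 (F : nat -> R) (k : nat) : R :=
  match k with O => 0 | S k' => sum1 F k' + F k end.

Fixpoint maxabs1 (F : nat -> R) (k : nat) : R :=
  match k with O => 0 | S k' => Rmax (maxabs1 F k') (Rabs (F k)) end.

Definition nodes_ok (M : nat) (xi : nat -> R) : Prop :=
  (1 <= M)%nat /\ 0 <= xi 1%nat /\ xi M <= 1 /\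
  (forall m, (1 <= m)%nat -> (m < M)%nat -> xi m < xi (S m)).

(* For increasing nodes in [0,1]: 0 is a node iff xi 1 = 0, 1 is a node iff xi M = 1. *)
Definition zero_is_node (xi : nat -> R) : bool :=
  if Req_EM_T (xi 1%nat) 0 then true else false.
Definition one_is_node (M : nat) (xi : nat -> R) : bool :=
  if Req_EM_T (xi M) 1 then true else false.

Definition num_sub (M : nat) (xi : nat -> R) : nat :=
  ((M - 1) + (if zero_is_node xi then 0 else 1)
           + (if one_is_node M xi then 0 else 1))%nat.

Definition xiR (M : nat) (xi : nat -> R) (n : nat) : R :=
  if Nat.eqb n 0 then 0
  else if Nat.eqb n (num_sub M xi) then 1
  else if zero_is_node xi then xi (S n) else xi n.

Fixpoint lag_prod (xi : nat -> R) (m : nat) (x : R) (k : nat) : R :=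
  match k with
  | O => 1
  | S k' => lag_prod xi m x k' *
            (if Nat.eqb k m then 1 else (x - xi k) / (xi m - xi k))
  end.
Definition lagrange (M : nat) (xi : nat -> R) (m : nat) (x : R) : R :=
  lag_prod xi m x M.

Definition weight (M : nat) (xi : nat -> R) (n m : nat) : R :=
  RInt (lagrange M xi m) (xiR M xi (n - 1)) (xiR M xi n).

Definition tgrid (M : nat) (xi : nat -> R) (h : R) (n : nat) : R := xiR M xi n * h.
Definition hstep (M : nat) (xi : nat -> R) (h : R) (n : nat) : R :=
  (xiR M xi n - xiR M xi (n - 1)) * h.

Definition CM_R (M : nat) (g : R -> R) : Prop :=
  (forall k x, (k <= M)%nat -> ex_derive_n g k x) /\
  (forall x, continuous (Derive_n g M) x).

(* Error norm of the previous iterate etap (given by its values at the time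
   points): maximum error over all its components used by the scheme, i.e.
   the quadrature nodes xi_m h (m=1..M) and the grid points t_n (n=1..N). *)
Definition err_norm (M : nat) (xi : nat -> R) (h : R) (etap y : R -> R) : R :=
  Rmax (maxabs1 (fun m => etap (xi m * h) - y (xi m * h)) M)
       (maxabs1 (fun n => etap (tgrid M xi h n) - y (tgrid M xi h n)) (num_sub M xi)).

From Stdlib Require Import Reals Lra Lia Factorial.
From Coquelicot Require Import Coquelicot.
Open Scope R_scope.

(* Subtracting the exact increment y(t_n) - y(t_(n-1)) from the scheme, the error
   e_n = eta_n - y(t_n) satisfies
     e_n = e_(n-1) + h_n [f(eta_n) - f(y(t_n))] - h_n [f(etap(t_n)) - f(y(t_n))]
           + h sum_m w_(n,m) [f(etap(xi_m h)) - f(y(xi_m h))] + tau_n,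
   where tau_n is the quadrature error of the weights on f o y.  The rule integrates
   the Lagrange interpolant, so it is exact on polynomials of degree < M, and tau_n
   is controlled by the Taylor remainder of f o y: |tau_n| = O(h^(M+1)).  The
   Lipschitz bound then gives (1 - hL)|e_n| <= |e_(n-1)| + C h (L ||e^[p]|| + h^M),
   and since 2hL < 1 the factor 1/(1 - hL) is at most both 2 and exp(2hL);
   iterating over the N subintervals gives the estimate. *)

(** * Polynomial functions of bounded degree *)

Fixpoint poly_deg_lt (k : nat) (p : R -> R) : Prop :=
  match k with
  | O => forall x, p x = 0
  | S k' => exists q c, poly_deg_lt k' q /\ forall x, p x = x * q x + c
  end.

Lemma poly_deg_lt_ext k p q :
  poly_deg_lt k p -> (forall x, p x = q x) -> poly_deg_lt k q.
Proof.
  destruct k as [|k]; simpl.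
  - intros Hp E x. rewrite <- E. apply Hp.
  - intros [r [c [Hr Ep]]] E. exists r, c. split; [exact Hr|].
    intros x. rewrite <- E. apply Ep.
Qed.

Lemma poly_deg_lt_0 k : poly_deg_lt k (fun _ => 0).
Proof.
  induction k as [|k IH]; simpl; auto.
  exists (fun _ => 0), 0. split; [exact IH|]. intros; ring.
Qed.

Lemma poly_deg_lt_S k p : poly_deg_lt k p -> poly_deg_lt (S k) p.
Proof.
  revert p; induction k as [|k IH]; intros p Hp.
  - exists (fun _ => 0), 0. split; [apply poly_deg_lt_0|]. intros x. rewrite Hp. ring.
  - destruct Hp as [q [c [Hq Ep]]]. exists q, c. split; [apply IH, Hq | exact Ep].
Qed.

Lemma poly_deg_lt_plus k p q :
  poly_deg_lt k p -> poly_deg_lt k q -> poly_deg_lt k (fun x => p x + q x).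
Proof.
  revert p q; induction k as [|k IH]; simpl; intros p q Hp Hq.
  - intros x. rewrite Hp, Hq. ring.
  - destruct Hp as [p1 [c [Hp1 Ep]]], Hq as [q1 [d [Hq1 Eq]]].
    exists (fun x => p1 x + q1 x), (c + d). split; [apply IH; assumption|].
    intros x. rewrite Ep, Eq. ring.
Qed.

Lemma poly_deg_lt_scal k p a : poly_deg_lt k p -> poly_deg_lt k (fun x => a * p x).
Proof.
  revert p; induction k as [|k IH]; simpl; intros p Hp.
  - intros x. rewrite Hp. ring.
  - destruct Hp as [q [c [Hq Ep]]].
    exists (fun x => a * q x), (a * c). split; [apply IH, Hq|].
    intros x. rewrite Ep. ring.
Qed.

Lemma poly_deg_lt_mul_lin k p a b :
  poly_deg_lt k p -> poly_deg_lt (S k) (fun x => p x * (a * x + b)).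
Proof.
  intros Hp.
  apply poly_deg_lt_ext with (fun x => (x * (a * p x) + 0) + b * p x).
  - apply poly_deg_lt_plus.
    + exists (fun x => a * p x), 0. split; [apply poly_deg_lt_scal, Hp | reflexivity].
    + apply poly_deg_lt_S, poly_deg_lt_scal, Hp.
  - intros x. ring.
Qed.

Lemma poly_deg_lt_pow j : poly_deg_lt (S j) (fun x => x ^ j).
Proof.
  induction j as [|j IH].
  - exists (fun _ => 0), 1. split; [apply poly_deg_lt_0|]. intros x. simpl. ring.
  - apply poly_deg_lt_ext with (fun x => x ^ j * (1 * x + 0)).
    + apply poly_deg_lt_mul_lin, IH.
    + intros x. simpl. ring.
Qed.

Lemma poly_deg_lt_comp_scal k p a :
  poly_deg_lt k p -> poly_deg_lt k (fun x => p (a * x)).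
Proof.
  revert p; induction k as [|k IH]; simpl; intros p Hp.
  - intros x. apply Hp.
  - destruct Hp as [q [c [Hq Ep]]].
    exists (fun x => a * q (a * x)), c. split.
    + apply poly_deg_lt_scal, IH, Hq.
    + intros x. rewrite Ep. ring.
Qed.

Lemma poly_deg_lt_sum1 k l (F : nat -> R -> R) :
  (forall m, (1 <= m <= k)%nat -> poly_deg_lt l (F m)) ->
  poly_deg_lt l (fun x => sum1 (fun m => F m x) k).
Proof.
  induction k as [|k IH]; intros HF; simpl.
  - apply poly_deg_lt_0.
  - apply poly_deg_lt_plus.
    + apply IH. intros m Hm. apply HF. lia.
    + apply HF. lia.
Qed.

Lemma poly_deg_lt_sum_f_R0 (c : nat -> R) n :
  poly_deg_lt (S n) (fun x => sum_f_R0 (fun j => c j * x ^ j) n).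
Proof.
  induction n as [|n IH].
  - exists (fun _ => 0), (c O). split; [apply poly_deg_lt_0|]. intros x. simpl. ring.
  - apply poly_deg_lt_ext
      with (fun x => sum_f_R0 (fun j => c j * x ^ j) n + c (S n) * x ^ S n);
      [|intros; reflexivity].
    apply poly_deg_lt_plus.
    + apply poly_deg_lt_S, IH.
    + apply poly_deg_lt_scal, poly_deg_lt_pow.
Qed.

Lemma continuous_poly k p : poly_deg_lt k p -> forall x, continuous p x.
Proof.
  revert p; induction k as [|k IH]; simpl; intros p Hp x.
  - apply continuous_ext with (fun _ => 0); [intros t; rewrite Hp; reflexivity|].
    apply continuous_const.
  - destruct Hp as [q [c [Hq Ep]]].
    apply continuous_ext with (fun t => plus (mult t (q t)) c).
    { intros t. rewrite Ep. reflexivity. }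
    apply (@continuous_plus R_UniformSpace R_AbsRing R_NormedModule
             (fun t : R => mult t (q t)) (fun _ => c)).
    + apply (@continuous_mult R_UniformSpace R_AbsRing (fun t : R => t) q).
      * apply continuous_id.
      * apply IH, Hq.
    + apply continuous_const.
Qed.

Lemma ex_RInt_poly k p a b : poly_deg_lt k p -> ex_RInt p a b.
Proof.
  intros Hp. apply (@ex_RInt_continuous R_CompleteNormedModule).
  intros z _. apply (continuous_poly k), Hp.
Qed.

Lemma poly_factor k p r : poly_deg_lt (S k) p ->
  exists q, poly_deg_lt k q /\ forall x, p x - p r = (x - r) * q x.
Proof.
  revert p; induction k as [|k IH]; intros p [q [c [Hq Ep]]].
  - exists (fun _ => 0). split; [apply poly_deg_lt_0|].
    intros x. rewrite !Ep, !Hq. ring.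
  - destruct (IH q Hq) as [s [Hs Es]].
    exists (fun x => q x + r * s x). split.
    + apply poly_deg_lt_plus; [exact Hq|]. apply poly_deg_lt_S, poly_deg_lt_scal, Hs.
    + intros x. rewrite !Ep.
      replace (x * q x + c - (r * q r + c)) with ((x - r) * q x + r * (q x - q r)) by ring.
      rewrite Es. ring.
Qed.

Lemma poly_eq0_of_roots k p (z : nat -> R) :
  poly_deg_lt k p ->
  (forall i j, (1 <= i <= k)%nat -> (1 <= j <= k)%nat -> z i = z j -> i = j) ->
  (forall i, (1 <= i <= k)%nat -> p (z i) = 0) ->
  forall x, p x = 0.
Proof.
  revert p; induction k as [|k IH]; intros p Hp Hz Hroot x.
  - apply Hp.
  - destruct (poly_factor k p (z (S k)) Hp) as [q [Hq Eq]].
    assert (Hq0 : forall x, q x = 0).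
    { apply IH; [exact Hq | intros i j Hi Hj; apply Hz; lia |].
      intros i Hi.
      assert (Hzi : z i - z (S k) <> 0).
      { intros E. assert (i = S k) by (apply Hz; [lia | lia | lra]). lia. }
      assert (Ei := Eq (z i)). rewrite !Hroot in Ei by lia.
      assert (E : (z i - z (S k)) * q (z i) = 0) by lra.
      apply Rmult_integral in E as [E|E]; lra. }
    assert (Ex := Eq x). rewrite Hq0, Hroot in Ex by lia. lra.
Qed.

(** * Sums, nodes and Lagrange weights *)

Lemma sum1_ext F G k :
  (forall m, (1 <= m <= k)%nat -> F m = G m) -> sum1 F k = sum1 G k.
Proof.
  induction k as [|k IH]; intros H; simpl; [reflexivity|].
  rewrite IH, H; [reflexivity | lia | intros; apply H; lia].
Qed.

Lemma sum1_0 k : sum1 (fun _ => 0) k = 0.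
Proof. induction k as [|k IH]; simpl; [reflexivity|]. rewrite IH. ring. Qed.

Lemma sum1_plus F G k : sum1 (fun m => F m + G m) k = sum1 F k + sum1 G k.
Proof. induction k as [|k IH]; simpl; [ring|]. rewrite IH. ring. Qed.

Lemma sum1_scal c F k : c * sum1 F k = sum1 (fun m => c * F m) k.
Proof. induction k as [|k IH]; simpl; [ring|]. rewrite <- IH. ring. Qed.

Lemma sum1_abs F k : Rabs (sum1 F k) <= sum1 (fun m => Rabs (F m)) k.
Proof.
  induction k as [|k IH]; simpl.
  - rewrite Rabs_R0. lra.
  - eapply Rle_trans; [apply Rabs_triang | lra].
Qed.

Lemma sum1_le F G k :
  (forall m, (1 <= m <= k)%nat -> F m <= G m) -> sum1 F k <= sum1 G k.
Proof.
  induction k as [|k IH]; intros H; simpl; [lra|].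
  apply Rplus_le_compat; [apply IH; intros; apply H | apply H]; lia.
Qed.

Lemma sum1_nonneg F k : (forall m, (1 <= m <= k)%nat -> 0 <= F m) -> 0 <= sum1 F k.
Proof. intros H. rewrite <- (sum1_0 k). apply sum1_le, H. Qed.

Lemma sum1_ge_term F k i :
  (forall m, (1 <= m <= k)%nat -> 0 <= F m) -> (1 <= i <= k)%nat -> F i <= sum1 F k.
Proof.
  induction k as [|k IH]; intros H Hi; simpl; [lia|].
  destruct (Nat.eq_dec i (S k)) as [->|Hik].
  - assert (0 <= sum1 F k) by (apply sum1_nonneg; intros; apply H; lia). lra.
  - assert (F i <= sum1 F k) by (apply IH; [intros; apply H |]; lia).
    assert (0 <= F (S k)) by (apply H; lia). lra.
Qed.

Lemma sum1_delta F k i :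
  (1 <= i <= k)%nat -> (forall m, (1 <= m <= k)%nat -> m <> i -> F m = 0) ->
  sum1 F k = F i.
Proof.
  induction k as [|k IH]; intros Hi H; simpl; [lia|].
  destruct (Nat.eq_dec i (S k)) as [->|Hik].
  - rewrite (sum1_ext _ (fun _ => 0)), sum1_0; [ring|]. intros; apply H; lia.
  - rewrite IH, (H (S k)); [ring | lia | lia | lia | intros; apply H; lia].
Qed.

Lemma maxabs1_nonneg F k : 0 <= maxabs1 F k.
Proof.
  induction k as [|k IH]; simpl; [lra|]. eapply Rle_trans; [apply IH | apply Rmax_l].
Qed.

Lemma maxabs1_ge F k i : (1 <= i <= k)%nat -> Rabs (F i) <= maxabs1 F k.
Proof.
  induction k as [|k IH]; intros Hi; simpl; [lia|].
  destruct (Nat.eq_dec i (S k)) as [->|Hik]; [apply Rmax_r|].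
  eapply Rle_trans; [apply IH; lia | apply Rmax_l].
Qed.

Lemma nodes_lt M xi :
  nodes_ok M xi -> forall i j, (1 <= i)%nat -> (i < j)%nat -> (j <= M)%nat -> xi i < xi j.
Proof.
  intros (_ & _ & _ & Hs) i j Hi Hij Hj.
  induction Hij as [|j Hij IH].
  - apply Hs; lia.
  - apply Rlt_trans with (xi j); [apply IH; lia | apply Hs; lia].
Qed.

Lemma nodes_inj M xi :
  nodes_ok M xi ->
  forall i j, (1 <= i <= M)%nat -> (1 <= j <= M)%nat -> xi i = xi j -> i = j.
Proof.
  intros Hn i j Hi Hj E.
  destruct (Nat.lt_total i j) as [Hij|[Hij|Hij]]; [| exact Hij |].
  - assert (xi i < xi j) by (apply (nodes_lt M); auto; lia). lra.
  - assert (xi j < xi i) by (apply (nodes_lt M); auto; lia). lra.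
Qed.

Lemma nodes_range M xi : nodes_ok M xi -> forall m, (1 <= m <= M)%nat -> 0 <= xi m <= 1.
Proof.
  intros Hn m Hm. pose proof Hn as (_ & H0 & H1 & _). split.
  - destruct (Nat.eq_dec m 1) as [->|Hm1]; [exact H0|].
    assert (xi 1%nat < xi m) by (apply (nodes_lt M); auto; lia). lra.
  - destruct (Nat.eq_dec m M) as [->|HmM]; [exact H1|].
    assert (xi m < xi M) by (apply (nodes_lt M); auto; lia). lra.
Qed.

Lemma xiR_range M xi :
  nodes_ok M xi -> forall n, (n <= num_sub M xi)%nat -> 0 <= xiR M xi n <= 1.
Proof.
  intros Hn n Hn'. pose proof Hn as [HM _]. unfold xiR.
  destruct (Nat.eqb_spec n 0); [lra|].
  destruct (Nat.eqb_spec n (num_sub M xi)); [lra|].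
  unfold num_sub in *.
  destruct (zero_is_node xi), (one_is_node M xi); apply (nodes_range M); auto; lia.
Qed.

Lemma lag_prod_S_deg l xi m k :
  S k <> m -> poly_deg_lt l (fun x => lag_prod xi m x k) ->
  poly_deg_lt (S l) (fun x => lag_prod xi m x (S k)).
Proof.
  intros Hkm Hp.
  apply poly_deg_lt_ext with (fun x => lag_prod xi m x k *
    (/ (xi m - xi (S k)) * x + - xi (S k) / (xi m - xi (S k)))).
  - apply poly_deg_lt_mul_lin, Hp.
  - intros x. cbn [lag_prod]. rewrite (proj2 (Nat.eqb_neq _ _) Hkm). unfold Rdiv. ring.
Qed.

Lemma lag_prod_S_self xi m k x : S k = m -> lag_prod xi m x (S k) = lag_prod xi m x k.
Proof. intros Hkm. cbn [lag_prod]. rewrite (proj2 (Nat.eqb_eq _ _) Hkm). ring. Qed.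

Lemma lag_prod_deg xi m k : poly_deg_lt (S k) (fun x => lag_prod xi m x k).
Proof.
  induction k as [|k IH].
  - exists (fun _ => 0), 1. split; [apply poly_deg_lt_0|]. intros x. simpl. ring.
  - destruct (Nat.eq_dec (S k) m) as [Hkm|Hkm].
    + apply poly_deg_lt_S. apply poly_deg_lt_ext with (1 := IH).
      intros x. rewrite lag_prod_S_self; auto.
    + apply lag_prod_S_deg; assumption.
Qed.

Lemma lag_prod_deg_skip xi m k :
  (1 <= m <= k)%nat -> poly_deg_lt k (fun x => lag_prod xi m x k).
Proof.
  induction k as [|k IH]; intros Hm; [lia|].
  destruct (Nat.eq_dec (S k) m) as [Hkm|Hkm].
  - apply poly_deg_lt_ext with (1 := lag_prod_deg xi m k).
    intros x. rewrite lag_prod_S_self; auto.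
  - apply lag_prod_S_deg; [assumption | apply IH; lia].
Qed.

Lemma lagrange_deg M xi m : (1 <= m <= M)%nat -> poly_deg_lt M (lagrange M xi m).
Proof. apply lag_prod_deg_skip. Qed.

Lemma lag_prod_node_other xi m i k :
  (1 <= i <= k)%nat -> i <> m -> lag_prod xi m (xi i) k = 0.
Proof.
  induction k as [|k IH]; intros Hi Him; [lia|]. cbn [lag_prod].
  destruct (Nat.eq_dec i (S k)) as [->|Hik].
  - rewrite (proj2 (Nat.eqb_neq _ _) Him). unfold Rdiv. ring.
  - rewrite IH by lia. ring.
Qed.

Lemma lag_prod_node_self xi m k :
  (forall j, (1 <= j <= k)%nat -> j <> m -> xi m <> xi j) -> lag_prod xi m (xi m) k = 1.
Proof.
  induction k as [|k IH]; intros H; [reflexivity|]. cbn [lag_prod].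
  rewrite IH by (intros; apply H; lia).
  destruct (Nat.eqb_spec (S k) m) as [Hkm|Hkm]; [ring|].
  assert (xi m - xi (S k) <> 0) by (apply Rminus_eq_contra, H; [lia | auto]).
  field. assumption.
Qed.

Lemma lagrange_interp_poly M xi p :
  nodes_ok M xi -> poly_deg_lt M p ->
  forall x, sum1 (fun m => p (xi m) * lagrange M xi m x) M = p x.
Proof.
  intros Hn Hp x.
  enough (H : forall x, sum1 (fun m => p (xi m) * lagrange M xi m x) M + -1 * p x = 0)
    by (specialize (H x); lra).
  apply (poly_eq0_of_roots M _ xi).
  - apply poly_deg_lt_plus; [| apply poly_deg_lt_scal, Hp].
    apply (poly_deg_lt_sum1 M M (fun m x => p (xi m) * lagrange M xi m x)).
    intros m Hm. apply poly_deg_lt_scal, lagrange_deg, Hm.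
  - apply (nodes_inj M), Hn.
  - intros i Hi. rewrite (sum1_delta _ M i Hi).
    + unfold lagrange. rewrite lag_prod_node_self; [ring|].
      intros j Hj Hji E. apply Hji, eq_sym, (nodes_inj M xi); auto.
    + intros m Hm Hmi. unfold lagrange. rewrite lag_prod_node_other by lia. ring.
Qed.

Lemma is_RInt_sum1 (F : nat -> R -> R) a b k :
  (forall m, (1 <= m <= k)%nat -> ex_RInt (F m) a b) ->
  is_RInt (fun x => sum1 (fun m => F m x) k) a b (sum1 (fun m => RInt (F m) a b) k).
Proof.
  induction k as [|k IH]; intros HF; simpl.
  - pose proof (@is_RInt_const R_NormedModule a b 0) as H0.
    change (scal (b - a) 0) with ((b - a) * 0) in H0.
    rewrite Rmult_0_r in H0. exact H0.
  - apply (@is_RInt_plus R_NormedModule).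
    + apply IH. intros m Hm. apply HF. lia.
    + apply (@RInt_correct R_CompleteNormedModule), HF. lia.
Qed.

Lemma quadrature_exact M xi p a b :
  nodes_ok M xi -> poly_deg_lt M p ->
  sum1 (fun m => RInt (lagrange M xi m) a b * p (xi m)) M = RInt p a b.
Proof.
  intros Hn Hp.
  rewrite (RInt_ext p (fun x => sum1 (fun m => p (xi m) * lagrange M xi m x) M))
    by (intros; symmetry; apply lagrange_interp_poly; assumption).
  symmetry. apply (@is_RInt_unique R_CompleteNormedModule).
  replace (sum1 (fun m => RInt (lagrange M xi m) a b * p (xi m)) M)
    with (sum1 (fun m => RInt (fun x => p (xi m) * lagrange M xi m x) a b) M).
  - apply (is_RInt_sum1 (fun m x => p (xi m) * lagrange M xi m x)).
    intros m Hm. apply (ex_RInt_poly M), poly_deg_lt_scal, lagrange_deg, Hm.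
  - apply sum1_ext. intros m Hm.
    rewrite (Rmult_comm (RInt _ _ _)).
    exact (@RInt_scal R_CompleteNormedModule (lagrange M xi m) a b (p (xi m))
             (ex_RInt_poly M _ a b (lagrange_deg M xi m Hm))).
Qed.

Lemma quadrature_exact_scaled M xi p a b h :
  nodes_ok M xi -> poly_deg_lt M p ->
  h * sum1 (fun m => RInt (lagrange M xi m) a b * p (xi m * h)) M = RInt p (a * h) (b * h).
Proof.
  intros Hn Hp.
  assert (Hph : poly_deg_lt M (fun x => p (x * h))).
  { apply poly_deg_lt_ext with (fun x => p (h * x)).
    - apply poly_deg_lt_comp_scal, Hp.
    - intros x. rewrite Rmult_comm. reflexivity. }
  rewrite (quadrature_exact M xi (fun x => p (x * h))) by assumption.
  change (h * RInt (fun x => p (x * h)) a b) with (scal h (RInt (fun x => p (x * h)) a b)).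
  rewrite <- (@RInt_scal R_CompleteNormedModule) by (apply (ex_RInt_poly M), Hph).
  rewrite (RInt_ext _ (fun x => scal h (p (h * x + 0))))
    by (intros x _; rewrite Rplus_0_r, (Rmult_comm h x); reflexivity).
  rewrite (@RInt_comp_lin R_CompleteNormedModule)
    by (apply (ex_RInt_poly M), Hp).
  rewrite !Rplus_0_r, (Rmult_comm h a), (Rmult_comm h b). reflexivity.
Qed.

(** * Mean value bounds and the local quadrature error *)

Lemma filterlim_within_incl {T U : Type} (F : (T -> Prop) -> Prop) {FF : Filter F}
    (D D' : T -> Prop) (f : T -> U) (G : (U -> Prop) -> Prop) :
  (forall x, D x -> D' x) -> filterlim f (within D' F) G -> filterlim f (within D F) G.
Proof.
  intros HD. apply filterlim_filter_le_1.
  intros P HP. unfold within in *.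
  apply (filter_imp (fun x => D' x -> P x)); [|exact HP].
  intros x HPx Dx. apply HPx, HD, Dx.
Qed.

Lemma filterlim_Rminus (u v : R -> R) (F : (R -> Prop) -> Prop) {FF : Filter F} a b :
  filterlim u F (locally a) -> filterlim v F (locally b) ->
  filterlim (fun s => u s - v s) F (locally (a - b)).
Proof.
  intros Hu Hv.
  eapply (filterlim_comp_2 u (fun s => opp (v s)) plus Hu).
  - eapply filterlim_comp; [exact Hv | apply (@filterlim_opp R_AbsRing R_NormedModule)].
  - apply (@filterlim_plus R_AbsRing R_NormedModule).
Qed.

Lemma filterlim_within_eps (phi : R -> R) (D : R -> Prop) x :
  filterlim phi (within D (locally x)) (locally (phi x)) ->
  forall eps, 0 < eps ->
  exists del, 0 < del /\
    forall s, D s -> Rabs (s - x) < del -> Rabs (phi s - phi x) < eps.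
Proof.
  intros H eps Heps.
  destruct (proj1 (filterlim_locally phi (phi x)) H (mkposreal eps Heps)) as [d Hd].
  exists d. split; [apply cond_pos|]. intros s Ds Hs. apply (Hd s); assumption.
Qed.

Lemma Rabs_sub_le_of_derive_interior (phi df : R -> R) a b B u v :
  (forall x, a < x < b -> is_derive phi x (df x)) ->
  (forall x, a < x < b -> Rabs (df x) <= B) ->
  a < u -> u <= v -> v < b -> Rabs (phi v - phi u) <= B * (v - u).
Proof.
  intros Hd HB Hau Huv Hvb.
  destruct (MVT_gen phi u v df) as [c [Hc Ec]].
  - intros x Hx. rewrite Rmin_left, Rmax_right in Hx by lra. apply Hd. lra.
  - intros x Hx. rewrite Rmin_left, Rmax_right in Hx by lra.
    apply continuity_pt_filterlim, (@ex_derive_continuous R_AbsRing R_NormedModule).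
    exists (df x). apply Hd. lra.
  - rewrite Rmin_left, Rmax_right in Hc by lra.
    rewrite Ec, Rabs_mult, (Rabs_right (v - u)) by lra.
    apply Rmult_le_compat_r; [lra | apply HB; lra].
Qed.

(* The mean value bound only needs one-sided continuity at the endpoints:
   apply it on [a + d, b - d] and let d go to 0. *)
Lemma Rabs_sub_le_of_derive (phi df : R -> R) a b B :
  a <= b ->
  filterlim phi (within (fun s => a <= s <= b) (locally a)) (locally (phi a)) ->
  filterlim phi (within (fun s => a <= s <= b) (locally b)) (locally (phi b)) ->
  (forall x, a < x < b -> is_derive phi x (df x)) ->
  (forall x, a < x < b -> Rabs (df x) <= B) ->
  Rabs (phi b - phi a) <= B * (b - a).
Proof.
  intros Hab Hca Hcb Hd HB.
  destruct (Req_dec a b) as [<-|Hne].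
  { rewrite !Rminus_diag, Rabs_R0. lra. }
  assert (HB0 : 0 <= B).
  { apply Rle_trans with (Rabs (df ((a + b) / 2))); [apply Rabs_pos | apply HB; lra]. }
  apply Rle_plus_epsilon. intros eps Heps.
  destruct (filterlim_within_eps _ _ _ Hca (eps / 2)) as [d1 [Hd1 Ha]]; [lra|].
  destruct (filterlim_within_eps _ _ _ Hcb (eps / 2)) as [d2 [Hd2 Hb]]; [lra|].
  set (r := Rmin (Rmin d1 d2) (b - a)).
  assert (Hr1 : r <= d1) by (eapply Rle_trans; apply Rmin_l).
  assert (Hr2 : r <= d2) by (eapply Rle_trans; [apply Rmin_l | apply Rmin_r]).
  assert (Hr3 : r <= b - a) by apply Rmin_r.
  assert (Hr0 : 0 < r) by (repeat apply Rmin_pos; lra).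
  set (d := r / 3).
  assert (Hdr : 0 < d /\ 3 * d <= b - a /\ d < d1 /\ d < d2) by (unfold d; lra).
  assert (Ea : Rabs (phi (a + d) - phi a) < eps / 2).
  { apply Ha; [lra|]. rewrite Rabs_right; lra. }
  assert (Eb : Rabs (phi (b - d) - phi b) < eps / 2).
  { apply Hb; [lra|]. rewrite Rabs_left; lra. }
  assert (Emid : Rabs (phi (b - d) - phi (a + d)) <= B * ((b - d) - (a + d))).
  { apply (Rabs_sub_le_of_derive_interior phi df a b); auto; lra. }
  apply Rabs_lt_between in Ea, Eb. apply Rabs_le_between in Emid.
  apply Rabs_le_between. nra.
Qed.

Lemma Rabs_sub_RInt_le_of_derive (y g T : R -> R) lo hi E u v :
  (forall t, lo <= t <= hi ->
     filterlim y (within (fun s => lo <= s <= hi) (locally t)) (locally (y t))) ->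
  (forall t, lo < t < hi -> is_derive y t (g t)) ->
  (forall x, continuous T x) ->
  (forall t, lo <= t <= hi -> Rabs (g t - T t) <= E) ->
  lo <= u <= hi -> lo <= v <= hi ->
  Rabs (y v - y u - RInt T u v) <= E * Rabs (v - u).
Proof.
  intros Hyc Hyd HT HE Hu Hv.
  set (G := fun t => RInt T 0 t).
  assert (HG : forall t, is_derive G t (T t)).
  { intros t. apply (@is_derive_RInt R_NormedModule T G 0 t); [|apply HT].
    apply filter_forall. intros s.
    apply (@RInt_correct R_CompleteNormedModule), (@ex_RInt_continuous R_CompleteNormedModule).
    intros; apply HT. }
  assert (HChasles : RInt T u v = G v - G u).
  { assert (C : @eq R (RInt T 0 u + RInt T u v) (RInt T 0 v)).
    { apply (@RInt_Chasles R_CompleteNormedModule);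
        apply (@ex_RInt_continuous R_CompleteNormedModule); intros; apply HT. }
    unfold G. rewrite <- C. apply eq_sym, Rplus_minus_l. }
  set (psi := fun t => y t - G t).
  assert (Hpsi : forall u v, lo <= u <= v -> v <= hi -> Rabs (psi v - psi u) <= E * (v - u)).
  { intros u' v' Huv Hvh.
    assert (Hc : forall t, u' <= t <= v' ->
      filterlim psi (within (fun s => u' <= s <= v') (locally t)) (locally (psi t))).
    { intros t Ht. unfold psi. apply (filterlim_Rminus y G); [typeclasses eauto | |].
      - apply (filterlim_within_incl (locally t) _ (fun s => lo <= s <= hi)); [intros; lra|].
        apply Hyc. lra.
      - apply (filterlim_filter_le_1 (F := locally t)); [apply filter_le_within|].
        apply (@ex_derive_continuous R_AbsRing R_NormedModule).
        exists (T t). apply HG. }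
    apply (Rabs_sub_le_of_derive psi (fun t => g t - T t)); [lra | apply Hc; lra | apply Hc; lra | |].
    - intros t Ht. apply (is_derive_minus y G); [apply Hyd; lra | apply HG].
    - intros t Ht. apply HE. lra. }
  rewrite HChasles.
  replace (y v - y u - (G v - G u)) with (psi v - psi u) by (unfold psi; ring).
  destruct (Rle_dec u v) as [Huv|Hvu].
  - rewrite (Rabs_right (v - u)) by lra. apply Hpsi; lra.
  - rewrite Rabs_minus_sym, (Rabs_minus_sym v), (Rabs_right (u - v)) by lra.
    apply Hpsi; lra.
Qed.

Definition taylor_poly (n : nat) (g : R -> R) (t : R) : R :=
  sum_f_R0 (fun j => Derive_n g j 0 / INR (fact j) * t ^ j) (n - 1).

Lemma taylor_poly_deg n g : (1 <= n)%nat -> poly_deg_lt n (taylor_poly n g).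
Proof.
  intros Hn. unfold taylor_poly. replace n with (S (n - 1)) at 1 by lia.
  apply poly_deg_lt_sum_f_R0.
Qed.

Lemma taylor_poly_at_0 n g : taylor_poly n g 0 = g 0.
Proof.
  unfold taylor_poly. induction (n - 1)%nat as [|k IH]; simpl.
  - field.
  - rewrite IH. ring.
Qed.

Lemma taylor_remainder_bound n (g : R -> R) h K :
  (1 <= n)%nat -> (forall k x, (k <= n)%nat -> ex_derive_n g k x) ->
  (forall t, 0 <= t <= h -> Rabs (Derive_n g n t) <= K) ->
  forall t, 0 <= t <= h -> Rabs (g t - taylor_poly n g t) <= K * h ^ n / INR (fact n).
Proof.
  intros Hn Hd HK t Ht.
  assert (Hfact : 0 < INR (fact n)) by apply INR_fact_lt_0.
  assert (HK0 : 0 <= K) by (apply Rle_trans with (2 := HK 0 ltac:(lra)); apply Rabs_pos).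
  destruct (Req_dec t 0) as [->|Ht0].
  { rewrite taylor_poly_at_0, Rminus_diag, Rabs_R0.
    apply Rmult_le_pos; [apply Rmult_le_pos; [exact HK0 | apply pow_le; lra] |].
    apply Rlt_le, Rinv_0_lt_compat, Hfact. }
  destruct (Taylor_Lagrange g (n - 1) 0 t) as [z [Hz Ez]]; [lra | intros; apply Hd; lia |].
  replace (S (n - 1)) with n in Ez by lia.
  replace (g t - taylor_poly n g t) with (t ^ n / INR (fact n) * Derive_n g n z).
  2: { rewrite Ez. unfold taylor_poly. rewrite Rminus_0_r.
       rewrite (sum_eq _ (fun j => Derive_n g j 0 / INR (fact j) * t ^ j))
         by (intros; unfold Rdiv; ring).
       ring. }
  unfold Rdiv. rewrite !Rabs_mult, <- RPow_abs, (Rabs_right (/ _))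
    by (apply Rle_ge, Rlt_le, Rinv_0_lt_compat, Hfact).
  assert (Rabs t ^ n <= h ^ n) by (apply pow_incr; rewrite Rabs_right; lra).
  assert (Rabs (Derive_n g n z) <= K) by (apply HK; lra).
  assert (0 < / INR (fact n)) by (apply Rinv_0_lt_compat, Hfact).
  assert (0 <= Rabs t ^ n) by (apply pow_le, Rabs_pos).
  assert (0 <= Rabs (Derive_n g n z)) by apply Rabs_pos.
  replace (K * h ^ n * / INR (fact n)) with (h ^ n * / INR (fact n) * K) by ring.
  apply Rmult_le_compat; [| apply Rabs_pos | apply Rmult_le_compat_r |]; lra || nra.
Qed.

(* The rule is exact on T, so only g - T contributes, once through the weights and
   once through the integral of y'. *)
Lemma quadrature_error_of_poly_approx M xi h E (y g T : R -> R) a b :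
  nodes_ok M xi -> 0 < h -> poly_deg_lt M T ->
  (forall t, 0 <= t <= h -> Rabs (g t - T t) <= E) ->
  (forall t, 0 <= t <= h ->
     filterlim y (within (fun s => 0 <= s <= h) (locally t)) (locally (y t))) ->
  (forall t, 0 < t < h -> is_derive y t (g t)) ->
  0 <= a <= 1 -> 0 <= b <= 1 ->
  Rabs (h * sum1 (fun m => RInt (lagrange M xi m) a b * g (xi m * h)) M
        - (y (b * h) - y (a * h)))
  <= h * (sum1 (fun m => Rabs (RInt (lagrange M xi m) a b)) M + 1) * E.
Proof.
  intros Hn Hh HT HE Hyc Hyd Ha Hb.
  set (w := fun m => RInt (lagrange M xi m) a b).
  assert (HE0 : 0 <= E) by (apply Rle_trans with (2 := HE 0 ltac:(lra)); apply Rabs_pos).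
  assert (Hsplit : sum1 (fun m => w m * g (xi m * h)) M
                   = sum1 (fun m => w m * T (xi m * h)) M
                     + sum1 (fun m => w m * (g (xi m * h) - T (xi m * h))) M).
  { rewrite <- sum1_plus. apply sum1_ext. intros; ring. }
  assert (Hexact : h * sum1 (fun m => w m * T (xi m * h)) M = RInt T (a * h) (b * h))
    by (apply quadrature_exact_scaled; assumption).
  assert (Hdefect : Rabs (y (b * h) - y (a * h) - RInt T (a * h) (b * h)) <= E * h).
  { eapply Rle_trans.
    - apply (Rabs_sub_RInt_le_of_derive y g T 0 h E); auto; [apply (continuous_poly M), HT|nra|nra].
    - apply Rmult_le_compat_l; [exact HE0|].
      rewrite <- Rmult_minus_distr_r, Rabs_mult, (Rabs_right h) by lra.
      assert (Rabs (b - a) <= 1) by (apply Rabs_le; lra). nra. }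
  assert (Hrest : Rabs (sum1 (fun m => w m * (g (xi m * h) - T (xi m * h))) M)
                  <= sum1 (fun m => Rabs (w m)) M * E).
  { eapply Rle_trans; [apply sum1_abs|]. rewrite Rmult_comm, sum1_scal. apply sum1_le.
    intros m Hm. rewrite Rabs_mult, Rmult_comm. apply Rmult_le_compat_r; [apply Rabs_pos|].
    apply HE. destruct (nodes_range M xi Hn m Hm). split; nra. }
  change (Rabs (h * sum1 (fun m => w m * g (xi m * h)) M - (y (b * h) - y (a * h)))
          <= h * (sum1 (fun m => Rabs (w m)) M + 1) * E).
  rewrite Hsplit, Rmult_plus_distr_l, Hexact.
  apply Rabs_le_between in Hdefect, Hrest. apply Rabs_le_between. nra.
Qed.

(** * Discrete Gronwall inequality *)

Lemma discrete_gronwall_pow (u : nat -> R) A b N :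
  1 <= A -> 0 <= b ->
  (forall n, (n < N)%nat -> u (S n) <= A * (u n + b)) ->
  forall n, (n <= N)%nat -> u n <= A ^ n * (u O + INR n * b).
Proof.
  intros HA Hb Hstep n. induction n as [|n IH]; intros Hn.
  - simpl. lra.
  - assert (HAn : 1 <= A ^ n) by (apply pow_R1_Rle; lra).
    assert (Hu : u (S n) <= A * (A ^ n * (u O + INR n * b) + b)).
    { eapply Rle_trans; [apply Hstep; lia|].
      apply Rmult_le_compat_l; [lra|]. apply Rplus_le_compat_r, IH. lia. }
    assert (A * b <= A * (A ^ n * b)) by (apply Rmult_le_compat_l; nra).
    rewrite S_INR. simpl pow. nra.
Qed.

Lemma pow_le_exp A x n : 0 <= A -> A <= exp x -> A ^ n <= exp (INR n * x).
Proof.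
  intros HA0 HA. induction n as [|n IH].
  - simpl. rewrite Rmult_0_l, exp_0. lra.
  - rewrite S_INR, Rmult_plus_distr_r, Rmult_1_l, exp_plus. simpl pow.
    rewrite Rmult_comm. apply Rmult_le_compat; auto. apply pow_le, HA0.
Qed.

Lemma discrete_gronwall_implicit (u : nat -> R) q b N :
  0 <= q -> 2 * q < 1 -> 0 <= b -> 0 <= u O ->
  (forall n, (n < N)%nat -> (1 - q) * u (S n) <= u n + b) ->
  forall n, (n <= N)%nat -> u n <= exp (2 * INR N * q) * u O + 2 ^ N * INR N * b.
Proof.
  intros Hq0 Hq1 Hb Hu0 Hstep n Hn.
  set (A := / (1 - q)).
  assert (HA1 : 1 <= A) by (unfold A; rewrite <- Rinv_1; apply Rinv_le_contravar; lra).
  assert (HA2 : A <= 2).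
  { unfold A. replace 2 with (/ (1 / 2)) by field. apply Rinv_le_contravar; lra. }
  assert (HAexp : A <= exp (2 * q)).
  { pose proof (exp_ineq1_le (2 * q)).
    unfold A. apply Rmult_le_reg_l with (1 - q); [lra|]. rewrite Rinv_r by lra. nra. }
  assert (Hexplicit : forall k, (k < N)%nat -> u (S k) <= A * (u k + b)).
  { intros k Hk. unfold A. apply Rmult_le_reg_l with (1 - q); [lra|].
    rewrite <- Rmult_assoc, Rinv_r, Rmult_1_l by lra. apply Hstep, Hk. }
  assert (Hpow := discrete_gronwall_pow u A b N HA1 Hb Hexplicit n Hn).
  assert (HAN : A ^ n <= A ^ N) by (apply Rle_pow; assumption).
  assert (HANexp : A ^ N <= exp (2 * INR N * q)).
  { replace (2 * INR N * q) with (INR N * (2 * q)) by ring. apply pow_le_exp; lra. }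
  assert (HAN2 : A ^ N <= 2 ^ N) by (apply pow_incr; lra).
  assert (HnN : INR n <= INR N) by (apply le_INR, Hn).
  assert (HAn : 1 <= A ^ n) by (apply pow_R1_Rle; lra).
  assert (0 <= INR n * b) by (apply Rmult_le_pos; [apply pos_INR | exact Hb]).
  assert (A ^ n * (INR n * b) <= 2 ^ N * (INR N * b)).
  { apply Rmult_le_compat; [lra | assumption | lra | apply Rmult_le_compat_r; assumption]. }
  assert (A ^ n * u O <= exp (2 * INR N * q) * u O) by (apply Rmult_le_compat_r; lra).
  nra.
Qed.

(** * Error of one implicit SDC sweep *)

Definition weight_abs_sum (M : nat) (xi : nat -> R) (n : nat) : R :=
  sum1 (fun m => Rabs (weight M xi n m)) M.

Definition weight_abs_total (M : nat) (xi : nat -> R) : R :=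
  sum1 (weight_abs_sum M xi) (num_sub M xi).

Lemma hstep_abs_le M xi h n :
  nodes_ok M xi -> 0 < h -> (1 <= n <= num_sub M xi)%nat -> Rabs (hstep M xi h n) <= h.
Proof.
  intros Hn Hh Hnn.
  assert (Ha := xiR_range M xi Hn (n - 1) ltac:(lia)).
  assert (Hb := xiR_range M xi Hn n ltac:(lia)).
  unfold hstep. rewrite Rabs_mult, (Rabs_right h) by lra.
  assert (Rabs (xiR M xi n - xiR M xi (n - 1)) <= 1) by (apply Rabs_le; lra). nra.
Qed.

Lemma weight_abs_sum_nonneg M xi n : 0 <= weight_abs_sum M xi n.
Proof. apply sum1_nonneg. intros; apply Rabs_pos. Qed.

Lemma weight_abs_sum_le_total M xi n :
  (1 <= n <= num_sub M xi)%nat -> weight_abs_sum M xi n <= weight_abs_total M xi.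
Proof. apply sum1_ge_term. intros; apply weight_abs_sum_nonneg. Qed.

Lemma weight_abs_total_nonneg M xi : 0 <= weight_abs_total M xi.
Proof. apply sum1_nonneg. intros; apply weight_abs_sum_nonneg. Qed.

Section ImplicitSDC.

Variables (M : nat) (xi : nat -> R) (L K h : R) (y f g etap : R -> R) (etanew : nat -> R).

Hypotheses (Hnodes : nodes_ok M xi) (Hh : 0 < h) (HL : 0 <= L)
  (Hlip : forall a b, Rabs (f a - f b) <= L * Rabs (a - b))
  (Hyc : forall t, 0 <= t <= h ->
     filterlim y (within (fun s => 0 <= s <= h) (locally t)) (locally (y t)))
  (Hyd : forall t, 0 < t < h -> is_derive y t (f (y t)))
  (HCM : CM_R M g) (Hgf : forall t, 0 <= t <= h -> g t = f (y t))
  (HK : forall t, 0 <= t <= h -> Rabs (Derive_n g M t) <= K)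
  (Hrec : forall n, (1 <= n <= num_sub M xi)%nat ->
     etanew n = etanew (n - 1)%nat
                + hstep M xi h n * (f (etanew n) - f (etap (tgrid M xi h n)))
                + h * sum1 (fun m => weight M xi n m * f (etap (xi m * h))) M).

Let err (n : nat) : R := etanew n - y (tgrid M xi h n).
Let eps : R := err_norm M xi h etap y.
Let rem : R := K * h ^ M / INR (fact M).

Lemma err_norm_nonneg : 0 <= eps.
Proof. eapply Rle_trans; [apply maxabs1_nonneg | apply Rmax_l]. Qed.

Lemma rem_nonneg : 0 <= rem.
Proof.
  assert (HK0 : 0 <= K) by (eapply Rle_trans; [apply Rabs_pos | apply (HK 0); lra]).
  apply Rmult_le_pos; [apply Rmult_le_pos; [exact HK0 | apply pow_le; lra] |].
  apply Rlt_le, Rinv_0_lt_compat, INR_fact_lt_0.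
Qed.

Lemma err_norm_nodes m : (1 <= m <= M)%nat -> Rabs (etap (xi m * h) - y (xi m * h)) <= eps.
Proof.
  intros Hm. eapply Rle_trans; [|apply Rmax_l].
  apply (maxabs1_ge (fun m => etap (xi m * h) - y (xi m * h))), Hm.
Qed.

Lemma err_norm_grid n :
  (1 <= n <= num_sub M xi)%nat ->
  Rabs (etap (tgrid M xi h n) - y (tgrid M xi h n)) <= eps.
Proof.
  intros Hn. eapply Rle_trans; [|apply Rmax_r].
  apply (maxabs1_ge (fun n => etap (tgrid M xi h n) - y (tgrid M xi h n))), Hn.
Qed.

Lemma sdc_local_error n :
  (1 <= n <= num_sub M xi)%nat ->
  Rabs (h * sum1 (fun m => weight M xi n m * g (xi m * h)) M
        - (y (tgrid M xi h n) - y (tgrid M xi h (n - 1))))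
  <= h * (weight_abs_sum M xi n + 1) * rem.
Proof.
  intros Hn. pose proof Hnodes as [HM _].
  apply (quadrature_error_of_poly_approx M xi h rem y g (taylor_poly M g)).
  - exact Hnodes.
  - exact Hh.
  - apply taylor_poly_deg, HM.
  - apply taylor_remainder_bound; [exact HM | intros; apply (proj1 HCM); assumption | exact HK].
  - exact Hyc.
  - intros t Ht. rewrite Hgf by lra. apply Hyd, Ht.
  - apply xiR_range; [exact Hnodes | lia].
  - apply xiR_range; [exact Hnodes | lia].
Qed.

Lemma sdc_error_recursion n :
  (1 <= n <= num_sub M xi)%nat ->
  err n = err (n - 1)%nat
          + hstep M xi h n * (f (etanew n) - f (y (tgrid M xi h n)))
          - hstep M xi h n * (f (etap (tgrid M xi h n)) - f (y (tgrid M xi h n)))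
          + h * sum1 (fun m => weight M xi n m * (f (etap (xi m * h)) - f (y (xi m * h)))) M
          + (h * sum1 (fun m => weight M xi n m * g (xi m * h)) M
             - (y (tgrid M xi h n) - y (tgrid M xi h (n - 1)))).
Proof.
  intros Hn. unfold err. rewrite (Hrec n Hn) at 1.
  assert (Hsplit : sum1 (fun m => weight M xi n m * f (etap (xi m * h))) M
    = sum1 (fun m => weight M xi n m * g (xi m * h)) M
      + sum1 (fun m => weight M xi n m * (f (etap (xi m * h)) - f (y (xi m * h)))) M).
  { rewrite <- sum1_plus. apply sum1_ext. intros m Hm.
    rewrite Hgf; [ring|]. destruct (nodes_range M xi Hnodes m Hm). split; nra. }
  rewrite Hsplit. ring.
Qed.

Lemma sdc_propagated_error n :
  Rabs (sum1 (fun m => weight M xi n m * (f (etap (xi m * h)) - f (y (xi m * h)))) M)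
  <= weight_abs_sum M xi n * (L * eps).
Proof.
  eapply Rle_trans; [apply sum1_abs|]. unfold weight_abs_sum.
  rewrite Rmult_comm, sum1_scal. apply sum1_le. intros m Hm.
  rewrite Rabs_mult, Rmult_comm. apply Rmult_le_compat_r; [apply Rabs_pos|].
  eapply Rle_trans; [apply Hlip|]. apply Rmult_le_compat_l; [exact HL|].
  apply err_norm_nodes, Hm.
Qed.

Lemma sdc_step_error n :
  (1 <= n <= num_sub M xi)%nat ->
  (1 - h * L) * Rabs (err n)
  <= Rabs (err (n - 1)%nat) + h * (1 + weight_abs_total M xi) * (L * eps + rem).
Proof.
  intros Hn.
  set (W := weight_abs_sum M xi n).
  set (hs := hstep M xi h n).
  set (D := sum1 (fun m => weight M xi n m * (f (etap (xi m * h)) - f (y (xi m * h)))) M).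
  set (tau := h * sum1 (fun m => weight M xi n m * g (xi m * h)) M
              - (y (tgrid M xi h n) - y (tgrid M xi h (n - 1)))).
  assert (Hhs : Rabs hs <= h) by (apply hstep_abs_le; assumption).
  assert (Himpl : Rabs (hs * (f (etanew n) - f (y (tgrid M xi h n)))) <= h * L * Rabs (err n)).
  { rewrite Rabs_mult, Rmult_assoc.
    apply Rmult_le_compat; [apply Rabs_pos | apply Rabs_pos | exact Hhs | apply Hlip]. }
  assert (Hcorr : Rabs (hs * (f (etap (tgrid M xi h n)) - f (y (tgrid M xi h n))))
                  <= h * (L * eps)).
  { rewrite Rabs_mult. apply Rmult_le_compat; [apply Rabs_pos | apply Rabs_pos | exact Hhs |].
    eapply Rle_trans; [apply Hlip|]. apply Rmult_le_compat_l; [exact HL|].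
    apply err_norm_grid, Hn. }
  assert (HhD : Rabs (h * D) <= h * (W * (L * eps))).
  { rewrite Rabs_mult, (Rabs_right h) by lra.
    apply Rmult_le_compat_l; [lra | apply sdc_propagated_error]. }
  assert (Htau : Rabs tau <= h * (W + 1) * rem) by (apply sdc_local_error, Hn).
  assert (Htri : Rabs (err n) <= Rabs (err (n - 1)%nat) + h * L * Rabs (err n)
                   + h * (L * eps) + h * (W * (L * eps)) + h * (W + 1) * rem).
  { rewrite (sdc_error_recursion n Hn) at 1. fold hs D tau.
    apply Rabs_le_between in Himpl, Hcorr, HhD, Htau.
    pose proof (proj1 (Rabs_le_between _ _) (Rle_refl (Rabs (err (n - 1)%nat)))).
    apply Rabs_le. lra. }
  assert (Hmono : h * (1 + W) * (L * eps + rem)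
                  <= h * (1 + weight_abs_total M xi) * (L * eps + rem)).
  { pose proof err_norm_nonneg. pose proof rem_nonneg.
    apply Rmult_le_compat_r; [nra|]. apply Rmult_le_compat_l; [lra|].
    apply Rplus_le_compat_l, weight_abs_sum_le_total, Hn. }
  nra.
Qed.

Lemma sdc_error_bound :
  2 * h * L < 1 ->
  forall n, (n <= num_sub M xi)%nat ->
  Rabs (err n) <= exp (2 * INR (num_sub M xi) * (h * L)) * Rabs (err O)
                  + 2 ^ num_sub M xi * INR (num_sub M xi)
                    * (h * (1 + weight_abs_total M xi) * (L * eps + rem)).
Proof.
  intros HhL.
  apply (discrete_gronwall_implicit (fun n => Rabs (err n))); [nra | lra | | apply Rabs_pos |].
  - pose proof (weight_abs_total_nonneg M xi). pose proof err_norm_nonneg. pose proof rem_nonneg.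
    apply Rmult_le_pos; [apply Rmult_le_pos|]; lra || nra.
  - intros n Hn. replace n with (S n - 1)%nat at 2 by lia. apply sdc_step_error. lia.
Qed.

End ImplicitSDC.

Theorem corollary2 :
  forall (M : nat) (xi : nat -> R), nodes_ok M xi ->
  forall (L K : R), 0 <= L ->
  exists C1 C2 : R,
  forall (h y0 : R) (y f g : R -> R),
    0 < h ->
    2 * h * L < 1 ->
    (* f Lipschitz with constant L *)
    (forall a b, Rabs (f a - f b) <= L * Rabs (a - b)) ->
    (* y solves y' = f(y), y(0) = y0 on [0,h] *)
    y 0 = y0 ->
    (forall t, 0 <= t <= h ->
       filterlim y (within (fun s => 0 <= s <= h) (locally t)) (locally (y t))) ->
    (forall t, 0 < t < h -> is_derive y t (f (y t))) ->
    (* f o y in C^M([0,h]): it is the restriction of a C^M function g *)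
    CM_R M g ->
    (forall t, 0 <= t <= h -> g t = f (y t)) ->
    (* K bounds the M-th derivative of f o y on [0,h] *)
    (forall t, 0 <= t <= h -> Rabs (Derive_n g M t) <= K) ->
  forall (etap : R -> R) (eta0 : R) (etanew : nat -> R),
    etanew 0%nat = eta0 ->
    (forall n, (1 <= n <= num_sub M xi)%nat ->
       etanew n = etanew (n - 1)%nat
                  + hstep M xi h n * (f (etanew n) - f (etap (tgrid M xi h n)))
                  + h * sum1 (fun m => weight M xi n m * f (etap (xi m * h))) M) ->
  forall n, (1 <= n <= num_sub M xi)%nat ->
    Rabs (etanew n - y (tgrid M xi h n))
      <= exp (2 * INR (num_sub M xi) * h * L) * Rabs (eta0 - y0)
         + C1 * h * err_norm M xi h etap y
         + C2 * h ^ (M + 1).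
Proof.
  intros M xi Hnodes L K HL.
  set (N := num_sub M xi).
  set (C := 2 ^ N * INR N * (1 + weight_abs_total M xi)).
  exists (C * L), (C * K / INR (fact M)).
  intros h y0 y f g Hh HhL Hlip Hy0 Hyc Hyd HCM Hgf HK etap eta0 etanew H0 Hrec n Hn.
  assert (Hbound := sdc_error_bound M xi L K h y f g etap etanew
                      Hnodes Hh HL Hlip Hyc Hyd HCM Hgf HK Hrec HhL n ltac:(lia)).
  cbv beta in Hbound. fold N in Hbound.
  assert (Hstart : etanew 0%nat - y (tgrid M xi h 0) = eta0 - y0).
  { unfold tgrid, xiR. simpl. rewrite H0, Rmult_0_l, Hy0. reflexivity. }
  assert (Hconst : 2 ^ N * INR N * (h * (1 + weight_abs_total M xi)
                     * (L * err_norm M xi h etap y + K * h ^ M / INR (fact M)))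
                   = C * L * h * err_norm M xi h etap y + C * K / INR (fact M) * h ^ (M + 1)).
  { unfold C. rewrite pow_add. field. apply INR_fact_neq_0. }
  rewrite Hstart, Hconst in Hbound.
  replace (2 * INR N * h * L) with (2 * INR N * (h * L)) by ring.
  lra.
Qed.
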